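(* Assume the linear model $X_a=X^a\theta^0_a+\epsilon_a$ and that $S_0$ satisfies the $\Delta$-compatibility condition for some $\Delta>0$ with constant $\phi_{0,a}>0$. Then on the event $\Lambda_a$, for $\lambda\ge2\lambda_0$, $\mu\ge2\mu_0$ and $\lambda\ge(3+\frac{14}{\Delta})B\mu$, $$\frac1n\|X^a(\hat\theta^{\lambda,\mu}_a-\theta^0_a)\|_2^2+(\lambda-3B\mu)\|\hat\theta^{\lambda,\mu}_a-\theta^0_a\|_1\le\frac{s_0(2\lambda+B\mu)^2}{\phi_{0,a}^2}.$$
   Context: Fix a node $a$. $X_a\in\mathbb{R}^n$ is the observed $a$-th variable, $X^a$ the $n\times p$ observation matrix with $a$-th column set to zero, $X^a_j$ its $j$-th column, $\theta^0_a$ the true coefficient vector, $\epsilon_a$ the noise. $S_0=\{j:\theta^0_{a,j}\neq0\}$, $s_0=|S_0|$. For $S\subseteq\{1,\dots,p\}$, $\theta_S$ has entries $\theta_j\mathbf{1}\{j\in S\}$ and $\theta_{S^c}$ entries $\theta_j\mathbf{1}\{j\notin S\}$. The local difference matrix $D^a$: from a known local neighborhood graph with edge set $E_{\rm local}$, $D$ has a row $e_i-e_j$ per edge $\{i,j\}$, $i<j$; $D^a$ keeps rows with $a$-th entry $0$. $B$ bounds the number of nonzero entries in any column of $D^a$. $\hat\theta^{\lambda,\mu}_a=\operatorname{argmin}_{\theta_a}\big[\frac1n\|X_a-X^a\theta_a\|_2^2+\lambda\|\theta_a\|_1+\mu\|D^a\theta_a\|_1\big]$. For $\lambda_0,\mu_0>0$,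 $\Lambda_a:=\{\max_{j\neq a}\frac2n|\epsilon_a'X^a_j|\le\lambda_0+B\mu_0\}$. $\Delta$-compatibility condition: for all $\theta\in\mathbb{R}^p$ with $\|\theta_{S_0^c}\|_1\le(3+\Delta)\|\theta_{S_0}\|_1$ one has $\|\theta_{S_0}\|_1^2\le\frac{s_0\,\theta'X^{a\prime}X^a\theta}{n\phi_{0,a}^2}$. *)

From HB Require Import structures.
From mathcomp Require Import all_boot all_order all_algebra.
Set Implicit Arguments. Unset Strict Implicit. Unset Printing Implicit Defensive.
Import Order.TTheory GRing.Theory Num.Theory.
Local Open Scope ring_scope.

Section Defs.
Variable R : realFieldType.

Definition l1norm (p : nat) (v : 'cV[R]_p) : R := \sum_(i < p) `|v i 0|.

Definition sqnorm (m : nat) (v : 'cV[R]_m) : R := \sum_(i < m) (v i 0) ^+ 2.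

Definition restr (p : nat) (S : {set 'I_p}) (v : 'cV[R]_p) : 'cV[R]_p :=
  \col_j (if j \in S then v j 0 else 0).

(* X^a : the observation matrix with the a-th column set to zero *)
Definition Xminus (n p : nat) (a : 'I_p) (X : 'M[R]_(n, p)) : 'M[R]_(n, p) :=
  \matrix_(i, j) (if j == a then 0 else X i j).

Definition Xcol (n p : nat) (a : 'I_p) (X : 'M[R]_(n, p)) (j : 'I_p) : 'cV[R]_n :=
  col j (Xminus a X).

Definition dotv (m : nat) (u v : 'cV[R]_m) : R := \sum_(i < m) u i 0 * v i 0.

End Defs.

(* Rows of D^a: edges {i,j} of the local graph, i < j, not incident to a
   (the row e_i - e_j has a-th entry 0 iff i <> a and j <> a). *)
Definition Darow (p : nat) (E : rel 'I_p) (a : 'I_p) (i j : 'I_p) : bool :=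
  [&& (i < j)%N, E i j, i != a & j != a].

Definition fusedpen (R : realFieldType) (p : nat) (E : rel 'I_p) (a : 'I_p)
  (v : 'cV[R]_p) : R :=
  \sum_(i < p) \sum_(j < p | Darow E a i j) `|v i 0 - v j 0|.

(* number of nonzero entries of column k of D^a *)
Definition Dacolcount (p : nat) (E : rel 'I_p) (a : 'I_p) (k : 'I_p) : nat :=
  #|[set ij : 'I_p * 'I_p | Darow E a ij.1 ij.2 && ((k == ij.1) || (k == ij.2))]|.

Definition objective (R : realFieldType) (n p : nat) (E : rel 'I_p) (a : 'I_p)
  (X : 'M[R]_(n, p)) (lam mu : R) (theta : 'cV[R]_p) : R :=
  (n%:R)^-1 * sqnorm (col a X - Xminus a X *m theta)
  + lam * l1norm theta + mu * fusedpen E a theta.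

Definition supp (R : realFieldType) (p : nat) (v : 'cV[R]_p) : {set 'I_p} :=
  [set j | v j 0 != 0].

(* Comparing the objective at the minimiser with its value at theta0 gives the
   basic inequality.  On the event Lambda_a the noise term costs at most
   (lam/2 + B mu/2) |delta|_1, the l1 penalty gains lam (|delta_S0|_1 -
   |delta_S0^c|_1) and the fused penalty costs at most B mu |delta|_1, because
   each index lies in at most B rows of D^a.  This yields
   2 Q + (lam - 3 B mu) |delta_S0^c|_1 <= 3 (lam + B mu) |delta_S0|_1, with Q the
   prediction error; when lam >= (3 + 14/Delta) B mu this puts delta in the
   cone of the compatibility condition, so |delta_S0|_1^2 <= s0 Q / phi0^2, and
   the AM-GM inequality 4 lam |delta_S0|_1 <= Q + 4 lam^2 s0 / phi0^2 concludes. *)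
From HB Require Import structures.
From mathcomp Require Import all_boot all_order all_algebra.
From mathcomp Require Import ring lra.
Set Implicit Arguments.
Unset Strict Implicit.
Unset Printing Implicit Defensive.
Import Order.TTheory GRing.Theory Num.Theory.
Local Open Scope ring_scope.

Section ScalarInequalities.
Variable R : realFieldType.

Lemma amgm_of_sqr_le (c Q A t : R) :
  0 <= Q -> 0 <= c -> A ^+ 2 <= c * Q -> 2 * t * A <= Q + t ^+ 2 * c.
Proof.
move=> hQ hc hA; rewrite le_eqVlt eq_sym in hc; case/orP: hc => [/eqP c0|cpos].
  have A0 : A = 0.
    by apply/eqP; rewrite -sqrf_eq0 eq_le sqr_ge0 andbT -(mul0r Q) -c0.
  by rewrite A0 c0; lra.
rewrite -subr_ge0 -(pmulr_rge0 _ cpos).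
have -> : c * (Q + t ^+ 2 * c - 2 * t * A) = (c * Q - A ^+ 2) + (A - t * c) ^+ 2 by ring.
by rewrite addr_ge0 ?sqr_ge0 // subr_ge0.
Qed.

Lemma cone_of_basic_ineq (Delta lam b Q A C : R) :
  0 < Delta -> 0 < lam -> 0 <= b -> (3 + 14 / Delta) * b <= lam ->
  0 <= Q -> 0 <= A ->
  2 * Q + (lam - 3 * b) * C <= 3 * (lam + b) * A -> C <= (3 + Delta) * A.
Proof.
move=> hD hlam hb hlamb hQ hA hbasic.
have hDgap : 14 * b <= Delta * (lam - 3 * b).
  have e : Delta * ((3 + 14 / Delta) * b) = 3 * Delta * b + 14 * b.
    by field; rewrite gt_eqF.
  have := ler_wpM2l (ltW hD) hlamb; rewrite e; lra.
have hgap : 0 < lam - 3 * b.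
  rewrite ltNge; apply/negP => hle.
  have : Delta * (lam - 3 * b) <= 0 by rewrite pmulr_rle0.
  lra.
rewrite -(ler_pM2l hgap); apply: le_trans (_ : 3 * (lam + b) * A <= _).
  lra.
rewrite mulrA ler_wpM2r //; nra.
Qed.

Lemma oracle_ineq_of_basic_ineq (Delta lam b Q A C c : R) :
  0 < Delta -> 0 < lam -> 0 <= b -> (3 + 14 / Delta) * b <= lam ->
  0 <= Q -> 0 <= A -> 0 <= c ->
  2 * Q + (lam - 3 * b) * C <= 3 * (lam + b) * A ->
  (C <= (3 + Delta) * A -> A ^+ 2 <= c * Q) ->
  Q + (lam - 3 * b) * (A + C) <= (2 * lam + b) ^+ 2 * c.
Proof.
move=> hD hlam hb hlamb hQ hA hc hbasic hcompat.
have hAQ := amgm_of_sqr_le (2 * lam) hQ hc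
  (hcompat (cone_of_basic_ineq hD hlam hb hlamb hQ hA hbasic)).
have hsq : (2 * lam) ^+ 2 * c <= (2 * lam + b) ^+ 2 * c.
  by rewrite ler_wpM2r //; nra.
(* [hbasic] bounds the left side by [4 lam A - Q]. *)
lra.
Qed.

End ScalarInequalities.

Section Norms.
Variable R : realFieldType.

Lemma sqnorm_ge0 m (u : 'cV[R]_m) : 0 <= sqnorm u.
Proof. by rewrite sumr_ge0 // => i _; rewrite sqr_ge0. Qed.

Lemma sqnormB m (u v : 'cV[R]_m) :
  sqnorm (u - v) = sqnorm u - 2 * dotv u v + sqnorm v.
Proof.
rewrite /sqnorm /dotv mulr_sumr -sumrB -big_split /=.
by apply: eq_bigr => i _; rewrite !mxE; ring.
Qed.

Lemma dotv_mulmx m p (u : 'cV[R]_m) (M : 'M[R]_(m, p)) (d : 'cV[R]_p) :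
  dotv u (M *m d) = \sum_j d j 0 * dotv u (col j M).
Proof.
rewrite /dotv; under eq_bigr do rewrite mxE mulr_sumr.
rewrite exchange_big /=; apply: eq_bigr => j _; rewrite mulr_sumr.
by apply: eq_bigr => i _; rewrite !mxE; ring.
Qed.

Lemma l1norm_ge0 p (v : 'cV[R]_p) : 0 <= l1norm v.
Proof. exact: sumr_ge0. Qed.

Lemma l1norm_restrC p (S : {set 'I_p}) (v : 'cV[R]_p) :
  l1norm v = l1norm (restr S v) + l1norm (restr (~: S) v).
Proof.
rewrite /l1norm -big_split; apply: eq_bigr => i _; rewrite !mxE inE.
by case: (i \in S) => /=; rewrite normr0 ?addr0 ?add0r.
Qed.

(* Off the support of [t0] the difference [th - t0] is [th] itself. *)
Lemma l1norm_subr_le_restr p (t0 th : 'cV[R]_p) :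
  l1norm t0 - l1norm th <=
  l1norm (restr (supp t0) (th - t0)) - l1norm (restr (~: supp t0) (th - t0)).
Proof.
rewrite /l1norm -!sumrB; apply: ler_sum => i _; rewrite /supp !mxE !inE.
case: eqP => [->|_] /=; rewrite ?normr0 ?subr0 ?sub0r ?add0r //.
by rewrite distrC lerB_dist.
Qed.

Lemma sumr_pred2 p (f : 'I_p -> R) (i j : 'I_p) : i != j ->
  f i + f j = \sum_(k | (k == i) || (k == j)) f k.
Proof.
move=> neq_ij; rewrite (bigD1 i) ?eqxx //= (bigD1 j) /=; last first.
  by rewrite eqxx orbT eq_sym.
rewrite big1 ?addr0 // => k /andP [/andP [/orP [] -> //]]; by rewrite ?andbF.
Qed.

Lemma dist_subr_le (x y x' y' : R) :
  `|x - y| - `|x' - y'| <= `|x' - x| + `|y' - y|.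
Proof.
have := ler_distD x' x y; have := ler_distD y' x' y.
rewrite (distrC x' x); lra.
Qed.

(* Each term [|v_i - v_j|] of the penalty charges [|d_i| + |d_j|], and each
   index [k] is charged by at most [B] rows of [D^a]. *)
Lemma fusedpen_subr_le p (E : rel 'I_p) (a : 'I_p) (B : nat)
    (t0 th : 'cV[R]_p) :
  (forall k : 'I_p, (Dacolcount E a k <= B)%N) ->
  fusedpen E a t0 - fusedpen E a th <= B%:R * l1norm (th - t0).
Proof.
move=> colB; set f := fun k : 'I_p => `|(th - t0) k 0|.
apply: le_trans (_ : \sum_(i < p) \sum_(j < p | Darow E a i j) (f i + f j) <= _).
  rewrite /fusedpen -sumrB; apply: ler_sum => i _; rewrite -sumrB.
  by apply: ler_sum => j _; rewrite /f !mxE dist_subr_le.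
rewrite pair_big_dep /=.
have pair_sum q : Darow E a q.1 q.2 ->
    f q.1 + f q.2 = \sum_(k | (k == q.1) || (k == q.2)) f k.
  by case/andP=> lt_ij _; apply: sumr_pred2; rewrite neq_ltn lt_ij.
rewrite (eq_bigr _ pair_sum) (exchange_big_dep xpredT) //=.
rewrite /l1norm mulr_sumr; apply: ler_sum => k _.
rewrite sumr_const -[leLHS]mulr_natl ler_wpM2r ?normr_ge0 // ler_nat.
by have := colB k; rewrite /Dacolcount cardsE.
Qed.

End Norms.

Section FusedLassoModel.
Variables (R : realFieldType) (n p : nat) (a : 'I_p) (X : 'M[R]_(n, p)).
Variables (E : rel 'I_p) (B : nat) (theta0 : 'cV[R]_p) (eps : 'cV[R]_n).
Hypothesis linear_model : col a X = Xminus a X *m theta0 + eps.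
Hypothesis colcount_le : forall k : 'I_p, (Dacolcount E a k <= B)%N.

(* The a-th column of [X^a] vanishes, so the event bound at [j = a] is free. *)
Lemma dotv_Xminus_le (K : R) (d : 'cV[R]_p) : 0 <= K ->
  (forall j : 'I_p, j != a -> 2 / n%:R * `|dotv eps (Xcol a X j)| <= K) ->
  2 / n%:R * `|dotv eps (Xminus a X *m d)| <= K * l1norm d.
Proof.
move=> K_ge0 event; rewrite dotv_mulmx /l1norm mulr_sumr.
have c_ge0 : 0 <= 2 / n%:R :> R by rewrite divr_ge0 // ler0n.
apply: le_trans (_ : 2 / n%:R * \sum_j `|d j 0 * dotv eps (col j (Xminus a X))| <= _).
  by rewrite ler_wpM2l // ler_norm_sum.
rewrite mulr_sumr; apply: ler_sum => j _; rewrite normrM mulrCA [K * _]mulrC.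
rewrite ler_wpM2l //; have [->|neq_ja] := eqVneq j a; last exact: event.
suff -> : dotv eps (col a (Xminus a X)) = 0 by rewrite normr0 mulr0.
by rewrite /dotv big1 // => i _; rewrite !mxE eqxx mulr0.
Qed.

Lemma basic_inequality (lam mu : R) (thetahat : 'cV[R]_p) :
  objective E a X lam mu thetahat <= objective E a X lam mu theta0 ->
  (n%:R)^-1 * sqnorm (Xminus a X *m (thetahat - theta0))
  <= 2 / n%:R * dotv eps (Xminus a X *m (thetahat - theta0))
     + lam * (l1norm theta0 - l1norm thetahat)
     + mu * (fusedpen E a theta0 - fusedpen E a thetahat).
Proof.
have resid_hat : col a X - Xminus a X *m thetahat
    = eps - Xminus a X *m (thetahat - theta0).
  by rewrite linear_model mulmxBr; apply/matrixP => i j; rewrite !mxE; ring.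
have resid0 : col a X - Xminus a X *m theta0 = eps.
  by rewrite linear_model; apply/matrixP => i j; rewrite !mxE; ring.
rewrite /objective resid_hat resid0 sqnormB ?mulrDr ?mulrBr; lra.
Qed.

Lemma restricted_basic_inequality (lam0 mu0 lam mu : R) (thetahat : 'cV[R]_p) :
  0 < lam0 -> 0 < mu0 -> 2 * lam0 <= lam -> 2 * mu0 <= mu ->
  (forall j : 'I_p, j != a ->
     2 / n%:R * `|dotv eps (Xcol a X j)| <= lam0 + B%:R * mu0) ->
  objective E a X lam mu thetahat <= objective E a X lam mu theta0 ->
  2 * ((n%:R)^-1 * sqnorm (Xminus a X *m (thetahat - theta0)))
    + (lam - 3 * (B%:R * mu))
      * l1norm (restr (~: supp theta0) (thetahat - theta0))
  <= 3 * (lam + B%:R * mu) * l1norm (restr (supp theta0) (thetahat - theta0)).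
Proof.
move=> lam0_gt0 mu0_gt0 lam_ge mu_ge event opt.
set delta := thetahat - theta0.
set A := l1norm (restr (supp theta0) delta).
set C := l1norm (restr (~: supp theta0) delta).
have B_ge0 : 0 <= B%:R :> R by rewrite ler0n.
have noise := dotv_Xminus_le delta (K := lam0 + B%:R * mu0)
  (addr_ge0 (ltW lam0_gt0) (mulr_ge0 B_ge0 (ltW mu0_gt0))) event.
have fused := fusedpen_subr_le theta0 thetahat colcount_le.
have l1 := l1norm_subr_le_restr theta0 thetahat.
rewrite -/delta (l1norm_restrC (supp theta0)) -/A -/C in noise fused l1.
have Bmu0 : B%:R * mu0 <= B%:R * mu / 2.
  by rewrite -mulrA ler_wpM2l //; lra.
have noise' : 2 / n%:R * dotv eps (Xminus a X *m delta)
    <= (lam / 2 + B%:R * mu / 2) * (A + C).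
  apply: le_trans (ler_wpM2l _ (ler_norm _)) (le_trans noise _).
    by rewrite divr_ge0 // ler0n.
  by rewrite ler_wpM2r ?addr_ge0 ?l1norm_ge0 //; lra.
have lam_l1 : lam * (l1norm theta0 - l1norm thetahat) <= lam * (A - C).
  by rewrite ler_wpM2l //; lra.
have mu_fused : mu * (fusedpen E a theta0 - fusedpen E a thetahat)
    <= B%:R * mu * (A + C).
  by rewrite [B%:R * mu]mulrC -mulrA ler_wpM2l //; lra.
have := basic_inequality opt; rewrite -/delta -/A -/C.
move: noise' lam_l1 mu_fused; rewrite ?mulrDr ?mulrBr ?mulrDl ?mulrBl; lra.
Qed.

End FusedLassoModel.

Theorem mainTheorem13 (R : realFieldType) (n p : nat) (a : 'I_p)
  (X : 'M[R]_(n, p)) (theta0 : 'cV[R]_p) (eps : 'cV[R]_n)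
  (E : rel 'I_p) (B : nat)
  (Delta phi0 lam0 mu0 lam mu : R) (thetahat : 'cV[R]_p) :
  (0 < n)%N ->
  symmetric E ->
  (forall k : 'I_p, (Dacolcount E a k <= B)%N) ->
  col a X = Xminus a X *m theta0 + eps ->
  0 < Delta -> 0 < phi0 ->
  (forall theta : 'cV[R]_p,
     l1norm (restr (~: supp theta0) theta)
       <= (3 + Delta) * l1norm (restr (supp theta0) theta) ->
     l1norm (restr (supp theta0) theta) ^+ 2
       <= (#|supp theta0|%:R * sqnorm (Xminus a X *m theta))
          / (n%:R * phi0 ^+ 2)) ->
  0 < lam0 -> 0 < mu0 ->
  (forall j : 'I_p, j != a ->
     2 / n%:R * `|dotv eps (Xcol a X j)| <= lam0 + B%:R * mu0) ->
  2 * lam0 <= lam -> 2 * mu0 <= mu ->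
  (3 + 14 / Delta) * B%:R * mu <= lam ->
  (forall theta : 'cV[R]_p,
     objective E a X lam mu thetahat <= objective E a X lam mu theta) ->
  (n%:R)^-1 * sqnorm (Xminus a X *m (thetahat - theta0))
    + (lam - 3 * B%:R * mu) * l1norm (thetahat - theta0)
  <= #|supp theta0|%:R * (2 * lam + B%:R * mu) ^+ 2 / phi0 ^+ 2.
Proof.
move=> n_gt0 _ colB model Delta_gt0 phi0_gt0 compat lam0_gt0 mu0_gt0 event
  lam_ge mu_ge lam_ge_Bmu opt.
have basic := restricted_basic_inequality model colB lam0_gt0 mu0_gt0 lam_ge
  mu_ge event (opt theta0).
have -> : #|supp theta0|%:R * (2 * lam + B%:R * mu) ^+ 2 / phi0 ^+ 2
    = (2 * lam + B%:R * mu) ^+ 2 * (#|supp theta0|%:R / phi0 ^+ 2).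
  by ring.
rewrite (l1norm_restrC (supp theta0)) -[3 * _ * mu]mulrA.
rewrite -mulrA in lam_ge_Bmu.
apply: (oracle_ineq_of_basic_ineq Delta_gt0 _ _ lam_ge_Bmu _ _ _ basic).
- lra.
- by rewrite mulr_ge0 ?ler0n //; lra.
- by rewrite mulr_ge0 ?sqnorm_ge0 // invr_ge0 ler0n.
- exact: l1norm_ge0.
- by rewrite divr_ge0 ?ler0n ?sqr_ge0.
- move=> /compat; congr (_ <= _); rewrite invfM; field.
  by rewrite pnatr_eq0 -lt0n n_gt0 gt_eqF.
Qed.
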